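(* Let $L>0$ and $V\in C^0([0,L];\mathbb{R})$, and assume there is $\mathbf{x}_0\in(0,L)$ such that $V$ is strictly decreasing on $[0,\mathbf{x}_0]$ and strictly increasing on $[\mathbf{x}_0,L]$. Then the functions $x_\pm:[E_0,\infty)\to[0,L]$ are uniformly continuous, the function $\mathbb{R}\times[0,L]\to\mathbb{R}$, $(E,x)\mapsto d_{A,E}(x)$ is uniformly continuous, and there is $C>0$ such that for every $E\in\mathbb{R}$ the map $x\mapsto d_{A,E}(x)$ is $C$-Lipschitz.
   Context: $E_0=\min_{[0,L]}V=V(\mathbf{x}_0)$. For $E\ge E_0$: $x_-(E)$ is the solution of $V(x_-(E))=E$ with $x_-(E)\le\mathbf{x}_0$ if $E\le V(0)$, and $x_-(E)=0$ if $E\ge V(0)$; $x_+(E)$ is the solution of $V(x_+(E))=E$ with $x_+(E)\ge\mathbf{x}_0$ if $E\le V(L)$, and $x_+(E)=L$ if $E\ge V(L)$. For $E\ge E_0$, $K_E=\{V\le E\}$ and $d_{A,E}(x)=\inf_{y\in K_E}\left|\int_y^x\sqrt{(V(s)-E)_+}ds\right|$; for $E<E_0$, $d_{A,E}:=d_{A,E_0}$. *)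

From Stdlib Require Import Reals Lra ClassicalEpsilon.
From Coquelicot Require Import Coquelicot.
Open Scope R_scope.

Definition cont_on_0L (V : R -> R) (L : R) : Prop :=
  forall x, 0 <= x <= L -> forall eps, 0 < eps -> exists delta, 0 < delta /\
    forall y, 0 <= y <= L -> Rabs (y - x) < delta -> Rabs (V y - V x) < eps.

Definition strict_decr_on (V : R -> R) (a b : R) : Prop :=
  forall x y, a <= x -> x < y -> y <= b -> V y < V x.
Definition strict_incr_on (V : R -> R) (a b : R) : Prop :=
  forall x y, a <= x -> x < y -> y <= b -> V x < V y.

Definition E0 (V : R -> R) (x0 : R) : R := V x0.

Definition x_minus (V : R -> R) (x0 E : R) : R :=
  if Rle_dec E (V 0) then
    epsilon (inhabits 0) (fun x => 0 <= x <= x0 /\ V x = E)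
  else 0.

Definition x_plus (V : R -> R) (L x0 E : R) : R :=
  if Rle_dec E (V L) then
    epsilon (inhabits 0) (fun x => x0 <= x <= L /\ V x = E)
  else L.

Definition K_E (V : R -> R) (L E : R) (y : R) : Prop := 0 <= y <= L /\ V y <= E.

Definition dA_raw (V : R -> R) (L E x : R) : R :=
  real (Glb_Rbar (fun r => exists y, K_E V L E y /\
          r = Rabs (RInt (fun s => sqrt (Rmax (V s - E) 0)) y x))).

Definition dA (V : R -> R) (L x0 E x : R) : R :=
  if Rle_dec (E0 V x0) E then dA_raw V L E x else dA_raw V L (E0 V x0) x.

From Stdlib Require Import Reals Lra ClassicalEpsilon.
From Coquelicot Require Import Coquelicot.
Open Scope R_scope.

(* Since V is strictly monotone on both sides of x0, K_E is the interval
   [x_-(E), x_+(E)].  By compactness, strict monotonicity gives a uniform gap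
   V(x) - V(x + eps) >= delta > 0, which makes x_- and x_+ uniformly continuous.
   For E >= E0 the integrand sqrt((V - E)_+) is bounded by some M and is
   1/2-Hoelder in E; moving x, E, and a competitor y to the nearest point of the
   new K_E changes each integral by at most
   M |dx| + L sqrt |dE| + M max |dx_+-|, and this survives the infimum. *)

Definition unif_cont_on (P : R -> Prop) (f : R -> R) : Prop :=
  forall eps, 0 < eps -> exists delta, 0 < delta /\
    forall E E', P E -> P E' -> Rabs (E - E') < delta -> Rabs (f E - f E') < eps.

Lemma sqrt_add_le p q : 0 <= p -> 0 <= q -> sqrt (p + q) <= sqrt p + sqrt q.
Proof.
  intros Hp Hq.
  rewrite <- (sqrt_Rsqr (sqrt p + sqrt q)) by (generalize (sqrt_pos p) (sqrt_pos q); lra).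
  apply sqrt_le_1_alt. unfold Rsqr.
  replace ((sqrt p + sqrt q) * (sqrt p + sqrt q))
    with (sqrt p * sqrt p + sqrt q * sqrt q + 2 * (sqrt p * sqrt q)) by ring.
  rewrite !sqrt_sqrt by lra.
  generalize (Rmult_le_pos _ _ (sqrt_pos p) (sqrt_pos q)); lra.
Qed.

Lemma Rabs_sqrt_pos_part_sub u v :
  Rabs (sqrt (Rmax u 0) - sqrt (Rmax v 0)) <= sqrt (Rabs (u - v)).
Proof.
  assert (Hle : forall u v, v <= u ->
    Rabs (sqrt (Rmax u 0) - sqrt (Rmax v 0)) <= sqrt (Rabs (u - v))).
  { clear u v. intros u v Huv.
    assert (Hmono : sqrt (Rmax v 0) <= sqrt (Rmax u 0))
      by (apply sqrt_le_1_alt; unfold Rmax; repeat destruct Rle_dec; lra).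
    assert (Hsub : sqrt (Rmax u 0) <= sqrt (Rmax v 0 + (u - v)))
      by (apply sqrt_le_1_alt; unfold Rmax; repeat destruct Rle_dec; lra).
    generalize (sqrt_add_le (Rmax v 0) (u - v) (Rmax_r _ _) ltac:(lra)).
    rewrite !Rabs_right by lra. lra. }
  destruct (Rle_dec v u); [apply Hle; lra|].
  rewrite Rabs_minus_sym, (Rabs_minus_sym u). apply Hle; lra.
Qed.

Lemma Rabs_Rmax_sub_le a E E' : Rabs (Rmax a E - Rmax a E') <= Rabs (E - E').
Proof.
  unfold Rmax. repeat destruct Rle_dec; unfold Rabs; repeat destruct Rcase_abs; lra.
Qed.

Definition clamp (a b x : R) : R := Rmax a (Rmin b x).

Lemma clamp_in a b x : a <= b -> a <= clamp a b x <= b.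
Proof. intros. unfold clamp, Rmax, Rmin. repeat destruct Rle_dec; lra. Qed.

Lemma clamp_id a b x : a <= x <= b -> clamp a b x = x.
Proof. intros. unfold clamp, Rmax, Rmin. repeat destruct Rle_dec; lra. Qed.

Lemma Rabs_clamp_sub_le a b x y :
  a <= b -> Rabs (clamp a b x - clamp a b y) <= Rabs (x - y).
Proof.
  intros. unfold clamp, Rmax, Rmin.
  repeat destruct Rle_dec; unfold Rabs; repeat destruct Rcase_abs; lra.
Qed.

Lemma Rabs_clamp_moved_le a b a' b' y W :
  a' <= y <= b' -> Rabs (a - a') <= W -> Rabs (b - b') <= W ->
  Rabs (y - clamp a b y) <= W.
Proof.
  intros Hy Ha Hb. revert Ha Hb. unfold clamp, Rmax, Rmin.
  repeat destruct Rle_dec; unfold Rabs; repeat destruct Rcase_abs; lra.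
Qed.

Lemma continuity_pt_comp_affine (f : R -> R) a c x :
  (forall y, continuity_pt f y) -> continuity_pt (fun x => f (a * x + c)) x.
Proof.
  intros Hf. apply (continuity_pt_comp (fun x => a * x + c) f).
  - apply derivable_continuous_pt. reg.
  - apply Hf.
Qed.

Lemma ex_RInt_continuity (f : R -> R) a b :
  (forall x, continuity_pt f x) -> ex_RInt f a b.
Proof.
  intros Hc. apply (@ex_RInt_continuous R_CompleteNormedModule).
  intros z _. apply continuity_pt_filterlim, Hc.
Qed.

Lemma abs_RInt_le_const_abs (f : R -> R) M a b :
  (forall x, continuity_pt f x) -> (forall s, Rabs (f s) <= M) ->
  Rabs (RInt f a b) <= M * Rabs (b - a).
Proof.
  intros Hc Hb. rewrite Rmult_comm.
  apply (norm_RInt_le_const_abs f a b); [intros; apply Hb|].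
  apply (RInt_correct (V := R_CompleteNormedModule)), ex_RInt_continuity, Hc.
Qed.

Lemma RInt_minus_R (f g : R -> R) a b : ex_RInt f a b -> ex_RInt g a b ->
  RInt (fun s => f s - g s) a b = RInt f a b - RInt g a b.
Proof. exact (RInt_minus f g a b). Qed.

Lemma abs_RInt_perturb (f g : R -> R) M eta y1 x1 y2 x2 :
  (forall s, continuity_pt f s) -> (forall s, continuity_pt g s) ->
  (forall s, Rabs (g s) <= M) -> (forall s, Rabs (g s - f s) <= eta) ->
  Rabs (RInt g y2 x2) <=
    Rabs (RInt f y1 x1) + M * Rabs (y1 - y2) + eta * Rabs (x1 - y1) + M * Rabs (x2 - x1).
Proof.
  intros Hf Hg Hgb Hgf.
  assert (Hgf_cont : forall s, continuity_pt (fun s => g s - f s) s)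
    by (intro s; apply continuity_pt_minus; auto).
  assert (Hchasles : RInt g y2 x2 = RInt g y2 y1 + RInt f y1 x1
                       + RInt (fun s => g s - f s) y1 x1 + RInt g x1 x2).
  { rewrite <- (RInt_Chasles g y2 y1 x2), <- (RInt_Chasles g y1 x1 x2)
      by apply ex_RInt_continuity, Hg.
    rewrite (RInt_minus_R g f); [unfold plus; simpl; ring | apply ex_RInt_continuity; auto ..]. }
  rewrite Hchasles.
  generalize (abs_RInt_le_const_abs g M y2 y1 Hg Hgb)
             (abs_RInt_le_const_abs _ eta y1 x1 Hgf_cont Hgf)
             (abs_RInt_le_const_abs g M x1 x2 Hg Hgb).
  rewrite (Rabs_minus_sym y1 y2).
  generalize (Rabs_triang (RInt g y2 y1 + RInt f y1 x1 + RInt (fun s => g s - f s) y1 x1)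
                          (RInt g x1 x2))
             (Rabs_triang (RInt g y2 y1 + RInt f y1 x1) (RInt (fun s => g s - f s) y1 x1))
             (Rabs_triang (RInt g y2 y1) (RInt f y1 x1)).
  lra.
Qed.

Lemma is_glb_Rbar_real (S : R -> Prop) m :
  (exists r, S r) -> (forall r, S r -> m <= r) -> is_glb_Rbar S (real (Glb_Rbar S)).
Proof.
  intros [r0 Hr0] Hm. destruct (Glb_Rbar_correct S) as [Hlb Hglb].
  destruct (Glb_Rbar S) as [g| |].
  - split; assumption.
  - destruct (Hlb r0 Hr0).
  - destruct (Hglb (Finite m) Hm).
Qed.

Lemma real_Glb_Rbar_le_add (S1 S2 : R -> Prop) m c :
  (exists r, S1 r) -> (forall r, S2 r -> m <= r) ->
  (forall r, S1 r -> exists r', S2 r' /\ r' <= r + c) ->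
  real (Glb_Rbar S2) <= real (Glb_Rbar S1) + c.
Proof.
  intros [r0 Hr0] Hm Hmove.
  assert (Hlb1 : forall r, S1 r -> m - c <= r).
  { intros r Hr. destruct (Hmove r Hr) as [r' [Hr' Hle]]. generalize (Hm r' Hr'); lra. }
  destruct (Hmove r0 Hr0) as [r0' [Hr0' _]].
  destruct (is_glb_Rbar_real S2 m (ex_intro _ r0' Hr0') Hm) as [Hlb2 _].
  destruct (is_glb_Rbar_real S1 (m - c) (ex_intro _ r0 Hr0) Hlb1) as [_ Hglb1].
  cut (real (Glb_Rbar S2) - c <= real (Glb_Rbar S1)); [lra|].
  apply (Hglb1 (Finite _)). intros r Hr. destruct (Hmove r Hr) as [r' [Hr' Hle]].
  generalize (Hlb2 r' Hr'). simpl. lra.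
Qed.

Lemma strict_decr_on_gap (f : R -> R) a b eps :
  (forall x, continuity_pt f x) -> strict_decr_on f a b -> 0 < eps ->
  exists delta, 0 < delta /\
    forall x y, a <= x -> x + eps <= y -> y <= b -> delta <= f x - f y.
Proof.
  intros Hf Hdec Heps.
  destruct (Rle_dec (a + eps) b) as [Hab|Hab].
  2: { exists 1. split; [lra|]. intros; lra. }
  set (g x := f x - f (1 * x + eps)).
  destruct (continuity_ab_min g a (b - eps)) as [m [Hmin Hm]]; [lra| |].
  { intros c _. apply continuity_pt_minus; [apply Hf | apply continuity_pt_comp_affine, Hf]. }
  exists (g m). unfold g in *. rewrite Rmult_1_l in *. split.
  - generalize (Hdec m (m + eps)). lra.
  - intros x y Hx Hxy Hy. specialize (Hmin x ltac:(lra)). rewrite Rmult_1_l in Hmin.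
    destruct (Req_dec (x + eps) y) as [<-|Hne]; [lra|].
    generalize (Hdec (x + eps) y). lra.
Qed.

Lemma level_selector_unif_cont (f sel : R -> R) a b E0 :
  (forall x, continuity_pt f x) -> strict_decr_on f a b ->
  (forall E, E0 <= E ->
     a <= sel E <= b /\ f (sel E) <= E /\ (a < sel E -> f (sel E) = E)) ->
  unif_cont_on (Rle E0) sel.
Proof.
  intros Hf Hdec Hsel eps Heps.
  destruct (strict_decr_on_gap f a b eps Hf Hdec Heps) as [delta [Hdelta Hgap]].
  exists delta. split; [exact Hdelta|].
  assert (Hfar : forall E E', E0 <= E -> E0 <= E' ->
            sel E + eps <= sel E' -> delta <= E - E').
  { intros E E' HE HE' Hsep.
    destruct (Hsel E HE) as [HE1 [HE2 _]], (Hsel E' HE') as [HE'1 [_ HE'3]].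
    rewrite <- (HE'3 ltac:(lra)). generalize (Hgap (sel E) (sel E')). lra. }
  intros E E' HE HE' Hclose.
  destruct (Rlt_dec (Rabs (sel E - sel E')) eps) as [|Hn]; [assumption|exfalso].
  revert Hclose Hn. unfold Rabs. destruct Rcase_abs; destruct Rcase_abs; intros;
    first [generalize (Hfar E E' HE HE'); lra | generalize (Hfar E' E HE' HE); lra].
Qed.

Definition action_density (W : R -> R) (E s : R) : R := sqrt (Rmax (W s - E) 0).

Lemma action_density_continuous (W : R -> R) E :
  (forall x, continuity_pt W x) -> forall x, continuity_pt (action_density W E) x.
Proof.
  intros HW x eps Heps.
  destruct (HW x (eps * eps)) as [d [Hd Hclose]]; [nra|].
  exists d. split; [exact Hd|]. intros y Hy. specialize (Hclose y Hy).
  simpl in *. unfold R_dist, action_density in *.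
  eapply Rle_lt_trans; [apply Rabs_sqrt_pos_part_sub|].
  replace (W y - E - (W x - E)) with (W y - W x) by ring.
  rewrite <- (sqrt_Rsqr eps) by lra. apply sqrt_lt_1_alt. split; [apply Rabs_pos | exact Hclose].
Qed.

Lemma Rabs_action_density_sub (W : R -> R) E E' s :
  Rabs (action_density W E s - action_density W E' s) <= sqrt (Rabs (E - E')).
Proof.
  unfold action_density. eapply Rle_trans; [apply Rabs_sqrt_pos_part_sub|].
  replace (W s - E - (W s - E')) with (E' - E) by ring. rewrite Rabs_minus_sym. lra.
Qed.

Lemma dA_Rmax_E0 V L x0 E x : dA V L x0 E x = dA_raw V L (Rmax (E0 V x0) E) x.
Proof. unfold dA, Rmax. destruct Rle_dec; reflexivity. Qed.

Definition clamped (V : R -> R) (L x : R) : R := V (clamp 0 L x).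

Section Potential_well.

Variables (L x0 : R) (V : R -> R).
Hypotheses (HL : 0 < L) (HV : cont_on_0L V L) (Hx0 : 0 < x0 < L)
  (Hdec : strict_decr_on V 0 x0) (Hinc : strict_incr_on V x0 L).

Lemma clamped_eq x : 0 <= x <= L -> clamped V L x = V x.
Proof. intros. unfold clamped. rewrite clamp_id; auto. Qed.

Lemma clamped_continuous x : continuity_pt (clamped V L) x.
Proof.
  intros eps Heps.
  destruct (HV (clamp 0 L x) (clamp_in 0 L x ltac:(lra)) eps Heps) as [d [Hd Hclose]].
  exists d. split; [exact Hd|]. intros y [_ Hy]. simpl in *. unfold R_dist, clamped in *.
  apply Hclose; [apply clamp_in; lra|].
  eapply Rle_lt_trans; [apply Rabs_clamp_sub_le; lra | exact Hy].
Qed.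

Lemma level_point_exists a b E : 0 <= a <= b -> b <= L ->
  Rmin (V a) (V b) <= E <= Rmax (V a) (V b) -> exists x, a <= x <= b /\ V x = E.
Proof.
  intros Ha Hb HE.
  destruct (IVT_gen (clamped V L) a b E clamped_continuous) as [x [Hx HxE]].
  { rewrite !clamped_eq by lra. exact HE. }
  rewrite Rmin_left, Rmax_right in Hx by lra.
  exists x. rewrite clamped_eq in HxE by lra. auto.
Qed.

Lemma x_minus_spec E : E0 V x0 <= E ->
  0 <= x_minus V x0 E <= x0 /\ V (x_minus V x0 E) <= E /\
  (0 < x_minus V x0 E -> V (x_minus V x0 E) = E).
Proof.
  unfold E0, x_minus. intros HE. destruct (Rle_dec E (V 0)) as [H0|H0]; [|lra].
  assert (Hex : exists x, 0 <= x <= x0 /\ V x = E).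
  { apply level_point_exists; [lra | lra |].
    split; [apply Rle_trans with (V x0); [apply Rmin_r | lra]
           |apply Rle_trans with (V 0); [lra | apply Rmax_l]]. }
  destruct (epsilon_spec (inhabits 0) _ Hex) as [Hrange ->]. lra.
Qed.

Lemma x_plus_spec E : E0 V x0 <= E ->
  x0 <= x_plus V L x0 E <= L /\ V (x_plus V L x0 E) <= E /\
  (x_plus V L x0 E < L -> V (x_plus V L x0 E) = E).
Proof.
  unfold E0, x_plus. intros HE. destruct (Rle_dec E (V L)) as [H0|H0]; [|lra].
  assert (Hex : exists x, x0 <= x <= L /\ V x = E).
  { apply level_point_exists; [lra | lra |].
    split; [apply Rle_trans with (V x0); [apply Rmin_l | lra]
           |apply Rle_trans with (V L); [lra | apply Rmax_r]]. }
  destruct (epsilon_spec (inhabits 0) _ Hex) as [Hrange ->]. lra.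
Qed.

Lemma K_E_iff E y : E0 V x0 <= E ->
  K_E V L E y <-> x_minus V x0 E <= y <= x_plus V L x0 E.
Proof.
  intros HE.
  destruct (x_minus_spec E HE) as [Hm1 [Hm2 Hm3]], (x_plus_spec E HE) as [Hp1 [Hp2 Hp3]].
  set (a := x_minus V x0 E) in *. set (b := x_plus V L x0 E) in *.
  unfold K_E. split.
  - intros [Hy HVy]. split.
    + destruct (Rle_dec a y) as [|Hn]; [assumption|].
      generalize (Hdec y a); rewrite Hm3; lra.
    + destruct (Rle_dec y b) as [|Hn]; [assumption|].
      generalize (Hinc b y); rewrite Hp3; lra.
  - intros Hy. split; [lra|].
    destruct (Rle_dec y x0).
    + destruct (Req_dec y a) as [->|Hne]; [assumption|]. generalize (Hdec a y); lra.
    + destruct (Req_dec y b) as [->|Hne]; [assumption|]. generalize (Hinc y b); lra.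
Qed.

Lemma x_minus_unif_cont : unif_cont_on (Rle (E0 V x0)) (x_minus V x0).
Proof.
  apply (level_selector_unif_cont (clamped V L) _ 0 x0); [exact clamped_continuous | |].
  - intros x y Hx Hxy Hy. rewrite !clamped_eq by lra. apply Hdec; lra.
  - intros E HE. destruct (x_minus_spec E HE) as [Hm1 Hm2].
    rewrite clamped_eq by lra. auto.
Qed.

(* -x_+ selects the levels of the decreasing function x |-> V(-x) on [-L, -x0]. *)
Lemma x_plus_unif_cont : unif_cont_on (Rle (E0 V x0)) (x_plus V L x0).
Proof.
  intros eps Heps.
  destruct (level_selector_unif_cont (fun x => clamped V L (-1 * x + 0))
              (fun E => - x_plus V L x0 E) (- L) (- x0) (E0 V x0)) with eps
    as [delta [Hdelta Hclose]]; [| | |exact Heps|].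
  - intro x. apply continuity_pt_comp_affine, clamped_continuous.
  - intros x y Hx Hxy Hy. rewrite !clamped_eq by lra. apply Hinc; lra.
  - intros E HE. destruct (x_plus_spec E HE) as [Hp1 [Hp2 Hp3]].
    rewrite clamped_eq by lra. replace (-1 * - x_plus V L x0 E + 0) with (x_plus V L x0 E) by ring.
    repeat split; auto; lra.
  - exists delta. split; [exact Hdelta|]. intros E E' HE HE' HEE'.
    replace (x_plus V L x0 E - x_plus V L x0 E')
      with (- (- x_plus V L x0 E - - x_plus V L x0 E')) by ring.
    rewrite Rabs_Ropp. auto.
Qed.

Lemma dA_raw_clamped E x : 0 <= x <= L ->
  dA_raw V L E x = real (Glb_Rbar (fun r => exists y, K_E V L E y /\
                         r = Rabs (RInt (action_density (clamped V L) E) y x))).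
Proof.
  intros Hx. unfold dA_raw. f_equal. apply Glb_Rbar_eqset. intros r.
  split; intros [y [Hy ->]]; exists y; split; auto; f_equal; apply RInt_ext;
    intros s Hs; unfold action_density; rewrite clamped_eq; auto;
    destruct Hy as [Hy _]; unfold Rmin, Rmax in Hs; destruct Rle_dec; lra.
Qed.

Lemma action_density_bounded : exists M, 0 < M /\
  forall E s, E0 V x0 <= E -> Rabs (action_density (clamped V L) E s) <= M.
Proof.
  destruct (continuity_ab_maj (clamped V L) 0 L) as [xmax [Hmax _]];
    [lra | intros; apply clamped_continuous |].
  set (Vmax := clamped V L xmax).
  exists (sqrt (Rmax (Vmax - E0 V x0) 0) + 1). split.
  - generalize (sqrt_pos (Rmax (Vmax - E0 V x0) 0)); lra.
  - intros E s HE. unfold action_density. rewrite Rabs_right by (apply Rle_ge, sqrt_pos).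
    assert (Hs : clamped V L s <= Vmax).
    { unfold clamped at 1. rewrite <- (clamped_eq (clamp 0 L s)) by (apply clamp_in; lra).
      apply Hmax, clamp_in; lra. }
    cut (sqrt (Rmax (clamped V L s - E) 0) <= sqrt (Rmax (Vmax - E0 V x0) 0)); [lra|].
    apply sqrt_le_1_alt. unfold Rmax; repeat destruct Rle_dec; lra.
Qed.

Section Density_bound.

Variable M : R.
Hypothesis HM : forall E s, E0 V x0 <= E -> Rabs (action_density (clamped V L) E s) <= M.

(* Each competitor y1 of K_E1 is moved to its nearest point y2 of K_E2 = [x_-(E2), x_+(E2)]. *)
Lemma dA_raw_le E1 E2 x1 x2 W :
  E0 V x0 <= E1 -> E0 V x0 <= E2 -> 0 <= x1 <= L -> 0 <= x2 <= L ->
  Rabs (x_minus V x0 E1 - x_minus V x0 E2) <= W ->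
  Rabs (x_plus V L x0 E1 - x_plus V L x0 E2) <= W ->
  dA_raw V L E2 x2 <=
    dA_raw V L E1 x1 + (M * W + L * sqrt (Rabs (E1 - E2)) + M * Rabs (x1 - x2)).
Proof.
  intros HE1 HE2 Hx1 Hx2 Hm Hp.
  assert (HM0 : 0 <= M) by (eapply Rle_trans; [apply Rabs_pos | apply (HM E1 0 HE1)]).
  destruct (x_minus_spec E1 HE1) as [Hm1 _], (x_plus_spec E1 HE1) as [Hp1 _].
  destruct (x_minus_spec E2 HE2) as [Hm2 _], (x_plus_spec E2 HE2) as [Hp2 _].
  rewrite !dA_raw_clamped by assumption.
  apply (real_Glb_Rbar_le_add _ _ 0).
  - eexists. exists x0. split; [|reflexivity]. unfold K_E, E0 in *. lra.
  - intros r [y [_ ->]]. apply Rabs_pos.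
  - intros r [y1 [Hy1 ->]]. apply (K_E_iff E1 y1 HE1) in Hy1.
    set (y2 := clamp (x_minus V x0 E2) (x_plus V L x0 E2) y1).
    exists (Rabs (RInt (action_density (clamped V L) E2) y2 x2)). split.
    { exists y2. split; [|reflexivity]. apply (K_E_iff E2 y2 HE2), clamp_in. lra. }
    assert (Hy12 : Rabs (y1 - y2) <= W).
    { apply (Rabs_clamp_moved_le _ _ (x_minus V x0 E1) (x_plus V L x0 E1));
        [exact Hy1 | rewrite Rabs_minus_sym; assumption ..]. }
    assert (Hx1y1 : Rabs (x1 - y1) <= L) by (unfold Rabs; destruct Rcase_abs; lra).
    eapply Rle_trans.
    { apply (abs_RInt_perturb (action_density (clamped V L) E1) (action_density (clamped V L) E2)
               M (sqrt (Rabs (E1 - E2))) y1 x1 y2 x2);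
        [apply action_density_continuous, clamped_continuous .. | intro s; apply HM, HE2 |].
      intro s. rewrite (Rabs_minus_sym E1). apply Rabs_action_density_sub. }
    rewrite (Rabs_minus_sym x2).
    generalize (Rmult_le_compat_l M _ _ HM0 Hy12)
               (Rmult_le_compat_l _ _ _ (sqrt_pos (Rabs (E1 - E2))) Hx1y1).
    lra.
Qed.

Lemma dA_raw_dist E1 E2 x1 x2 W :
  E0 V x0 <= E1 -> E0 V x0 <= E2 -> 0 <= x1 <= L -> 0 <= x2 <= L ->
  Rabs (x_minus V x0 E1 - x_minus V x0 E2) <= W ->
  Rabs (x_plus V L x0 E1 - x_plus V L x0 E2) <= W ->
  Rabs (dA_raw V L E1 x1 - dA_raw V L E2 x2) <=
    M * W + L * sqrt (Rabs (E1 - E2)) + M * Rabs (x1 - x2).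
Proof.
  intros HE1 HE2 Hx1 Hx2 Hm Hp.
  generalize (dA_raw_le E1 E2 x1 x2 W HE1 HE2 Hx1 Hx2 Hm Hp).
  rewrite Rabs_minus_sym in Hm, Hp.
  generalize (dA_raw_le E2 E1 x2 x1 W HE2 HE1 Hx2 Hx1 Hm Hp).
  rewrite (Rabs_minus_sym E2), (Rabs_minus_sym x2).
  intros; apply Rabs_le; lra.
Qed.

Lemma dA_lipschitz E x y : 0 <= x <= L -> 0 <= y <= L ->
  Rabs (dA V L x0 E x - dA V L x0 E y) <= M * Rabs (x - y).
Proof.
  intros Hx Hy. rewrite !dA_Rmax_E0.
  set (F := Rmax (E0 V x0) E).
  assert (Hdiag : forall f : R -> R, Rabs (f F - f F) <= 0)
    by (intro f; rewrite Rminus_diag, Rabs_R0; lra).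
  generalize (dA_raw_dist F F x y 0 (Rmax_l _ _) (Rmax_l _ _) Hx Hy (Hdiag _) (Hdiag _)).
  rewrite Rminus_diag, Rabs_R0, sqrt_0. lra.
Qed.

Hypothesis HM_pos : 0 < M.

Lemma dA_unif_cont eps : 0 < eps -> exists delta, 0 < delta /\
  forall E E' x x', 0 <= x <= L -> 0 <= x' <= L ->
    Rabs (E - E') < delta -> Rabs (x - x') < delta ->
    Rabs (dA V L x0 E x - dA V L x0 E' x') < eps.
Proof.
  intros Heps. set (e := eps / 3). set (W := e / M). set (t := e / (L + 1)).
  assert (He : 0 < e) by (unfold e; lra).
  assert (HW : 0 < W) by (apply Rdiv_lt_0_compat; lra).
  assert (Ht : 0 < t) by (apply Rdiv_lt_0_compat; lra).
  assert (HLt : L * t < e).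
  { unfold t. apply (Rmult_lt_reg_r (L + 1)); [lra|]. field_simplify; lra. }
  destruct (x_minus_unif_cont W HW) as [dm [Hdm Hm]].
  destruct (x_plus_unif_cont W HW) as [dp [Hdp Hp]].
  exists (Rmin (Rmin dm dp) (Rmin W (t * t))). split.
  { repeat apply Rmin_glb_lt; nra. }
  intros E E' x x' Hx Hx' HE Hxx'.
  generalize (Rmin_l (Rmin dm dp) (Rmin W (t * t))) (Rmin_r (Rmin dm dp) (Rmin W (t * t)))
             (Rmin_l dm dp) (Rmin_r dm dp) (Rmin_l W (t * t)) (Rmin_r W (t * t)).
  intros Hd1 Hd2 Hd3 Hd4 Hd5 Hd6.
  rewrite !dA_Rmax_E0.
  set (F := Rmax (E0 V x0) E). set (F' := Rmax (E0 V x0) E').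
  assert (HFF' : Rabs (F - F') < Rmin (Rmin dm dp) (Rmin W (t * t)))
    by (eapply Rle_lt_trans; [apply Rabs_Rmax_sub_le | exact HE]).
  assert (Hsqrt : sqrt (Rabs (F - F')) < t).
  { rewrite <- (sqrt_square t) by lra. apply sqrt_lt_1_alt. split; [apply Rabs_pos | lra]. }
  assert (Hxx'M : M * Rabs (x - x') < e).
  { replace e with (M * W) by (unfold W; field; lra). apply Rmult_lt_compat_l; lra. }
  eapply Rle_lt_trans.
  { apply dA_raw_dist; [apply Rmax_l | apply Rmax_l | assumption | assumption | |];
      left; [apply Hm | apply Hp]; solve [apply Rmax_l | lra]. }
  replace (M * W) with e by (unfold W; field; lra).
  generalize (sqrt_pos (Rabs (F - F'))). unfold e in *. nra.
Qed.

End Density_bound.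

End Potential_well.

Theorem lemma2p1 (L : R) (V : R -> R) (x0 : R)
  (HL : 0 < L) (HV : cont_on_0L V L) (Hx0 : 0 < x0 < L)
  (Hdec : strict_decr_on V 0 x0) (Hinc : strict_incr_on V x0 L) :
  (* x_- and x_+ are uniformly continuous on [E0, oo) *)
  (forall eps, 0 < eps -> exists delta, 0 < delta /\
     forall E E', E0 V x0 <= E -> E0 V x0 <= E' -> Rabs (E - E') < delta ->
       Rabs (x_minus V x0 E - x_minus V x0 E') < eps) /\
  (forall eps, 0 < eps -> exists delta, 0 < delta /\
     forall E E', E0 V x0 <= E -> E0 V x0 <= E' -> Rabs (E - E') < delta ->
       Rabs (x_plus V L x0 E - x_plus V L x0 E') < eps) /\
  (* (E, x) |-> d_{A,E}(x) is uniformly continuous on R x [0,L] *)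
  (forall eps, 0 < eps -> exists delta, 0 < delta /\
     forall E E' x x', 0 <= x <= L -> 0 <= x' <= L ->
       Rabs (E - E') < delta -> Rabs (x - x') < delta ->
       Rabs (dA V L x0 E x - dA V L x0 E' x') < eps) /\
  (* uniform Lipschitz bound *)
  (exists C, 0 < C /\ forall E x y, 0 <= x <= L -> 0 <= y <= L ->
       Rabs (dA V L x0 E x - dA V L x0 E y) <= C * Rabs (x - y)).
Proof.
  destruct (action_density_bounded L x0 V HL HV) as [M [HM_pos HM]].
  split; [exact (x_minus_unif_cont L x0 V HL HV Hx0 Hdec)|].
  split; [exact (x_plus_unif_cont L x0 V HL HV Hx0 Hinc)|].
  split; [exact (dA_unif_cont L x0 V HL HV Hx0 Hdec Hinc M HM HM_pos)|].
  exists M. split; [exact HM_pos|].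
  exact (dA_lipschitz L x0 V HL HV Hx0 Hdec Hinc M HM).
Qed.
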